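(* For an integer $n>1$ define, for every integer $1<r<n$, $$E^{BW,P}_n(r)=\frac{2r(r-1)}{n^2}\sum_{k=r+1}^{n}\frac{n+k}{(k-1)(k-2)},$$ and let $\mathcal{M}(n)$ be a value of $r$ at which $E^{BW,P}_n$ attains its maximum. Let $$\vartheta=\frac{1}{2W\!\left(\frac{e^{3/2}}{2}\right)}=0.552001\dots,$$ the solution of $1-3x-2x\log x=0$. Then (i) $\lim_{n\to\infty}\mathcal{M}(n)/n=\vartheta$; (ii) $\lim_{n\to\infty}E^{BW,P}_n(\mathcal{M}(n))=\lim_{n\to\infty}E^{BW,P}_n(\lfloor n\vartheta\rfloor)=\vartheta(1+\vartheta)=0.8567\dots$.
   Context: $W$ denotes the principal (main) branch of the Lambert $W$ function, i.e. the inverse of $z\mapsto ze^z$ on $[-1,\infty)$. *)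

From Stdlib Require Import Reals Lra Lia ClassicalEpsilon.
From Coquelicot Require Import Coquelicot.
Open Scope R_scope.

(* Principal branch of the Lambert W function: for y >= -1/e, the unique
   w >= -1 with w * exp w = y (chosen by definite description). *)
Definition LambertW (y : R) : R :=
  epsilon (inhabits 0) (fun w => -1 <= w /\ w * exp w = y).

Definition vartheta : R := 1 / (2 * LambertW (exp (3/2) / 2)).

Definition EBWP (n r : nat) : R :=
  2 * INR r * (INR r - 1) / (INR n ^ 2) *
  sum_n_m (fun k => (INR n + INR k) / ((INR k - 1) * (INR k - 2))) (r + 1) n.

Definition nat_floor (x : R) : nat := Z.to_nat (Int_part x).

(* M is a maximizer of E_n over 1 < r < n, for every n for which this range
   is nonempty (n >= 3). *)
Definition is_maximizer (M : nat -> nat) : Prop :=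
  forall n : nat, (2 < n)%nat ->
    (1 < M n < n)%nat /\
    (forall r : nat, (1 < r < n)%nat -> EBWP n r <= EBWP n (M n)).

From Stdlib Require Import Reals Lra Lia ZArith ClassicalEpsilon.
From Coquelicot Require Import Coquelicot.
Open Scope R_scope.

(* The summand splits as (n + 1) (1/(k-2) - 1/(k-1)) + 1/(k-2): the first part
   telescopes and the second is a harmonic sum, i.e. a logarithm up to O(1/r).
   Hence E_n(r) = f(r/n) + O(1/n) uniformly in 1 < r < n, with
   f(x) = 2x - 2x^2 - 2x^2 ln x.  Since f'(x) = 2 (1 - 3x - 2x ln x) and
   1/x - 3 - 2 ln x is decreasing, f increases up to its unique critical point
   vartheta and decreases afterwards; the substitution vartheta = 1/(2w) turns
   the critical equation into w e^w = e^(3/2)/2.  So max_r E_n(r) is squeezed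
   between E_n(floor(n vartheta)) and f(vartheta) + O(1/n), both tending to
   f(vartheta) = vartheta (1 + vartheta), and since the maximum of f is strict,
   M(n)/n must tend to vartheta. *)

Lemma ln_sub_le a b : 0 < a -> 0 < b -> ln a - ln b <= (a - b) / b.
Proof.
  intros Ha Hb.
  rewrite <- ln_div by assumption.
  pose proof (exp_ineq1_le (ln (a / b))) as H.
  rewrite exp_ln in H by (apply Rdiv_lt_0_compat; assumption).
  replace ((a - b) / b) with (a / b - 1) by (field; lra). lra.
Qed.

Lemma ln_succ_sub_bounds x : 0 < x -> / (x + 1) <= ln (x + 1) - ln x <= / x.
Proof.
  intros Hx.
  pose proof (ln_sub_le (x + 1) x ltac:(lra) Hx) as Hup.
  pose proof (ln_sub_le x (x + 1) Hx ltac:(lra)) as Hlo.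
  replace ((x + 1 - x) / x) with (/ x) in Hup by (field; lra).
  replace ((x - (x + 1)) / (x + 1)) with (- / (x + 1)) in Hlo by (field; lra).
  lra.
Qed.

Lemma shifted_harmonic_sum_bounds (c : R) (a b : nat) :
  c < INR a -> (a <= b)%nat ->
  ln (INR b + 1 - c) - ln (INR a - c) <= sum_n_m (fun k => / (INR k - c)) a b
  <= / (INR a - c) + ln (INR b - c) - ln (INR a - c).
Proof.
  intros Hc Hab. induction Hab as [|b Hab IH].
  - rewrite sum_n_n.
    pose proof (ln_succ_sub_bounds (INR a - c) ltac:(lra)) as Ha.
    replace (INR a - c + 1) with (INR a + 1 - c) in Ha by ring. lra.
  - assert (INR a <= INR b) by (apply le_INR; exact Hab).
    rewrite sum_n_Sm by lia. change plus with Rplus. rewrite S_INR.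
    pose proof (ln_succ_sub_bounds (INR b - c) ltac:(lra)) as Hb.
    pose proof (ln_succ_sub_bounds (INR b + 1 - c) ltac:(lra)) as Hb1.
    replace (INR b - c + 1) with (INR b + 1 - c) in Hb by ring.
    replace (INR b + 1 - c + 1) with (INR b + 1 + 1 - c) in Hb1 by ring.
    lra.
Qed.

Lemma EBWP_sum_split (N : R) (r n : nat) : (2 <= r)%nat -> (r <= n)%nat ->
  sum_n_m (fun k => (N + INR k) / ((INR k - 1) * (INR k - 2))) (r + 1) n =
  (N + 1) * (/ (INR r - 1) - / (INR n - 1)) + sum_n_m (fun k => / (INR k - 2)) (r + 1) n.
Proof.
  intros Hr Hrn. assert (2 <= INR r) by (apply (le_INR 2); exact Hr).
  induction Hrn as [|n Hrn IH].
  - rewrite !sum_n_m_zero by lia. change zero with 0.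
    match goal with |- ?a = ?b => change (@eq R a b) end. ring.
  - assert (INR r <= INR n) by (apply le_INR; exact Hrn).
    rewrite !sum_n_Sm by lia. change plus with Rplus. rewrite IH, S_INR.
    match goal with |- ?a = ?b => change (@eq R a b) end. field. lra.
Qed.
Definition EBWP_profile (x : R) : R := 2 * x - 2 * x ^ 2 - 2 * x ^ 2 * ln x.

(* [s] stands for the harmonic part of the sum and [l] for [ln (n / r)]; the
   last four hypotheses are the logarithmic estimates with denominators cleared. *)
Lemma EBWP_profile_error (n r s l : R) :
  2 <= r -> r + 1 <= n -> 0 <= l -> r * l <= n - r ->
  -1 <= (n - 1) * (s - l) -> (r - 1) * (s - l) <= 2 ->
  Rabs (2 * r * (r - 1) / n ^ 2 * ((n + 1) * (/ (r - 1) - / (n - 1)) + s)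
        - (2 * (r / n) - 2 * (r / n) ^ 2 + 2 * (r / n) ^ 2 * l)) <= 10 / n.
Proof.
  intros Hr Hn Hl0 Hl1 Hslo Hshi.
  set (P := 4 * r * (n - r) + 2 * r * (r - 1) * (n - 1) * (s - l) - 2 * r * (n - 1) * l).
  assert (HQ : 0 < n ^ 2 * (n - 1)) by nra.
  match goal with |- Rabs ?d <= _ =>
    replace d with (P / (n ^ 2 * (n - 1))) by (unfold P; field; lra) end.
  assert (HP : Rabs P <= 5 * n ^ 2).
  { assert (0 <= r * (r - 1) * ((n - 1) * (s - l) + 1)) by (apply Rmult_le_pos; nra).
    assert (0 <= r * (n - 1) * (2 - (r - 1) * (s - l))) by (apply Rmult_le_pos; nra).
    assert (0 <= (n - 1) * (r * l)) by (apply Rmult_le_pos; nra).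
    assert ((n - 1) * (r * l) <= (n - 1) * (n - r)) by (apply Rmult_le_compat_l; lra).
    apply Rabs_le. unfold P. split; nra. }
  rewrite Rabs_div, (Rabs_pos_eq (n ^ 2 * (n - 1))) by lra.
  apply Rle_div_l; [exact HQ|].
  replace (10 / n * (n ^ 2 * (n - 1))) with (10 * n * (n - 1)) by (field; lra).
  nra.
Qed.

Lemma EBWP_approx (n r : nat) : (2 <= r)%nat -> (r < n)%nat ->
  Rabs (EBWP n r - EBWP_profile (INR r / INR n)) <= 10 / INR n.
Proof.
  intros Hr Hrn.
  assert (Hr2 : 2 <= INR r) by (apply (le_INR 2); exact Hr).
  assert (Hrn1 : INR r + 1 <= INR n) by (rewrite <- S_INR; apply le_INR; exact Hrn).
  destruct (shifted_harmonic_sum_bounds 2 (r + 1) n) as [Hlo Hhi];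
    [rewrite plus_INR; simpl; lra | lia |].
  unfold EBWP, EBWP_profile. rewrite EBWP_sum_split by lia. rewrite ln_div by lra.
  rewrite plus_INR in Hlo, Hhi. simpl INR in Hlo, Hhi.
  set (nn := INR n) in *. set (rr := INR r) in *.
  set (s := sum_n_m _ (r + 1) n) in *.
  replace (nn + 1 - 2) with (nn - 1) in Hlo by ring.
  replace (rr + 1 - 2) with (rr - 1) in Hlo, Hhi by ring.
  replace (2 * (rr / nn) - 2 * (rr / nn) ^ 2 - 2 * (rr / nn) ^ 2 * (ln rr - ln nn))
    with (2 * (rr / nn) - 2 * (rr / nn) ^ 2 + 2 * (rr / nn) ^ 2 * (ln nn - ln rr)) by ring.
  pose proof (ln_succ_sub_bounds (nn - 1) ltac:(lra)) as Hn.
  pose proof (ln_succ_sub_bounds (rr - 1) ltac:(lra)) as Hrr.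
  replace (nn - 1 + 1) with nn in Hn by ring.
  replace (rr - 1 + 1) with rr in Hrr by ring.
  assert (ln (nn - 2) <= ln nn) by (apply ln_le; lra).
  assert (ln (rr - 1) <= ln rr) by (apply ln_le; lra).
  assert (ln rr <= ln nn) by (apply ln_le; lra).
  assert (HL : ln nn - ln rr <= (nn - rr) / rr) by (apply ln_sub_le; lra).
  apply EBWP_profile_error; try lra.
  - apply Rle_div_r in HL; lra.
  - replace (-1) with ((nn - 1) * - / (nn - 1)) by (field; lra).
    apply Rmult_le_compat_l; lra.
  - replace 2 with ((rr - 1) * (2 / (rr - 1))) by (field; lra).
    apply Rmult_le_compat_l; [lra|].
    unfold Rdiv. lra.
Qed.

Lemma LambertW_spec y : 0 <= y -> -1 <= LambertW y /\ LambertW y * exp (LambertW y) = y.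
Proof.
  intros Hy. unfold LambertW. apply epsilon_spec.
  assert (Hc : continuity (fun w => w * exp w - y)) by reg.
  destruct (IVT_cor _ 0 y Hc Hy) as [w [Hw Hw0]].
  - rewrite exp_0. pose proof (exp_ineq1_le y). nra.
  - exists w. split; lra.
Qed.

Lemma LambertW_pos y : 0 < y -> 0 < LambertW y.
Proof.
  intros Hy. destruct (LambertW_spec y ltac:(lra)) as [_ Hw].
  pose proof (exp_pos (LambertW y)). nra.
Qed.

Lemma ln_LambertW y : 0 < y -> ln (LambertW y) + LambertW y = ln y.
Proof.
  intros Hy. destruct (LambertW_spec y ltac:(lra)) as [_ Hw].
  pose proof (LambertW_pos y Hy) as Hw0. set (w := LambertW y) in *.
  rewrite <- Hw, ln_mult, ln_exp by (try apply exp_pos; exact Hw0).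
  reflexivity.
Qed.

Lemma LambertW_vartheta_arg :
  1 / 2 < LambertW (exp (3 / 2) / 2) /\
  ln (LambertW (exp (3 / 2) / 2)) + LambertW (exp (3 / 2) / 2) = 3 / 2 - ln 2.
Proof.
  set (y := exp (3 / 2) / 2).
  assert (Hy : 0 < y) by (unfold y; pose proof (exp_pos (3 / 2)); lra).
  destruct (LambertW_spec y ltac:(lra)) as [_ Hw].
  pose proof (LambertW_pos y Hy) as Hw0. pose proof (ln_LambertW y Hy) as Hln.
  set (w := LambertW y) in *.
  split.
  - destruct (Rlt_or_le (1 / 2) w) as [|Hle]; [assumption|].
    assert (exp w < exp (3 / 2)) by (apply exp_increasing; lra).
    assert (w * exp w <= 1 / 2 * exp w) by (pose proof (exp_pos w); nra).
    unfold y in Hw. lra.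
  - rewrite Hln. unfold y. rewrite ln_div, ln_exp by (try apply exp_pos; lra). reflexivity.
Qed.

Lemma vartheta_bounds : 0 < vartheta < 1.
Proof.
  destruct LambertW_vartheta_arg as [Hw _].
  unfold vartheta. split; [apply Rdiv_lt_0_compat | apply Rlt_div_l]; lra.
Qed.

Definition EBWP_slope (x : R) : R := 1 - 3 * x - 2 * x * ln x.

Lemma EBWP_slope_vartheta : EBWP_slope vartheta = 0.
Proof.
  destruct LambertW_vartheta_arg as [Hw Hln].
  unfold EBWP_slope, vartheta. set (w := LambertW _) in *.
  rewrite ln_div, ln_mult, ln_1 by lra.
  replace (1 - 3 * (1 / (2 * w)) - 2 * (1 / (2 * w)) * (0 - (ln 2 + ln w)))
    with ((ln w + w - (3 / 2 - ln 2)) / w) by (field; lra).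
  rewrite Hln. unfold Rdiv. ring.
Qed.

Lemma inv_vartheta : / vartheta = 3 + 2 * ln vartheta.
Proof.
  pose proof vartheta_bounds. pose proof EBWP_slope_vartheta as H0.
  unfold EBWP_slope in H0. field_simplify_eq; lra.
Qed.

Lemma EBWP_slope_pos x : 0 < x < vartheta -> 0 < EBWP_slope x.
Proof.
  intros Hx. pose proof inv_vartheta.
  assert (ln x < ln vartheta) by (apply ln_increasing; lra).
  assert (/ vartheta < / x) by (apply Rinv_lt_contravar; nra).
  unfold EBWP_slope.
  replace (1 - 3 * x - 2 * x * ln x) with (x * (/ x - 3 - 2 * ln x)) by (field; lra).
  apply Rmult_lt_0_compat; lra.
Qed.

Lemma EBWP_slope_neg x : vartheta < x -> EBWP_slope x < 0.
Proof.
  intros Hx. pose proof vartheta_bounds. pose proof inv_vartheta.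
  assert (ln vartheta < ln x) by (apply ln_increasing; lra).
  assert (/ x < / vartheta) by (apply Rinv_lt_contravar; nra).
  unfold EBWP_slope.
  replace (1 - 3 * x - 2 * x * ln x) with (x * (/ x - 3 - 2 * ln x)) by (field; lra).
  assert (0 < x * - (/ x - 3 - 2 * ln x)) by (apply Rmult_lt_0_compat; lra).
  lra.
Qed.

Lemma EBWP_profile_derive x : 0 < x ->
  derivable_pt_lim EBWP_profile x (2 * EBWP_slope x).
Proof.
  intros Hx. apply is_derive_Reals. unfold EBWP_profile, EBWP_slope.
  auto_derive; [exact Hx|]. field. lra.
Qed.

Lemma EBWP_profile_increasing a b : 0 < a -> a < b -> b <= vartheta ->
  EBWP_profile a < EBWP_profile b.
Proof.
  intros Ha Hab Hb.
  destruct (MVT_cor2 EBWP_profile (fun x => 2 * EBWP_slope x) a b Hab) as [c [Hc Hcab]].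
  { intros c Hc. apply EBWP_profile_derive. lra. }
  pose proof (EBWP_slope_pos c ltac:(lra)). nra.
Qed.

Lemma EBWP_profile_decreasing a b : vartheta <= a -> a < b ->
  EBWP_profile b < EBWP_profile a.
Proof.
  intros Ha Hab. pose proof vartheta_bounds.
  destruct (MVT_cor2 EBWP_profile (fun x => 2 * EBWP_slope x) a b Hab) as [c [Hc Hcab]].
  { intros c Hc. apply EBWP_profile_derive. lra. }
  pose proof (EBWP_slope_neg c ltac:(lra)). nra.
Qed.

Lemma EBWP_profile_le_vartheta x : 0 < x -> EBWP_profile x <= EBWP_profile vartheta.
Proof.
  intros Hx. destruct (Rtotal_order x vartheta) as [H | [-> | H]].
  - left. apply EBWP_profile_increasing; lra.
  - lra.
  - left. apply EBWP_profile_decreasing; lra.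
Qed.

Lemma EBWP_profile_vartheta : EBWP_profile vartheta = vartheta * (1 + vartheta).
Proof.
  pose proof EBWP_slope_vartheta as H0. unfold EBWP_slope in H0. unfold EBWP_profile.
  replace (2 * vartheta ^ 2 * ln vartheta) with (vartheta * (2 * vartheta * ln vartheta)) by ring.
  replace (2 * vartheta * ln vartheta) with (1 - 3 * vartheta) by lra.
  ring.
Qed.

Lemma EBWP_profile_continuous x : 0 < x -> continuity_pt EBWP_profile x.
Proof.
  intros Hx. apply derivable_continuous_pt.
  exists (2 * EBWP_slope x). apply EBWP_profile_derive, Hx.
Qed.

Lemma EBWP_profile_near_max e : 0 < e -> exists d, 0 < d /\
  forall x, 0 < x -> EBWP_profile vartheta - d < EBWP_profile x -> Rabs (x - vartheta) < e.
Proof.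
  intros He. pose proof vartheta_bounds.
  set (e' := Rmin e (vartheta / 2)).
  assert (He' : 0 < e' <= e /\ e' <= vartheta / 2)
    by (unfold e'; split; [split; [apply Rmin_glb_lt|apply Rmin_l] | apply Rmin_r]; lra).
  pose proof (EBWP_profile_increasing (vartheta - e') vartheta ltac:(lra) ltac:(lra) ltac:(lra)).
  pose proof (EBWP_profile_decreasing vartheta (vartheta + e') ltac:(lra) ltac:(lra)).
  exists (Rmin (EBWP_profile vartheta - EBWP_profile (vartheta - e'))
               (EBWP_profile vartheta - EBWP_profile (vartheta + e'))).
  split; [apply Rmin_glb_lt; lra|].
  intros x Hx Hgap.
  pose proof (Rmin_l (EBWP_profile vartheta - EBWP_profile (vartheta - e'))
                     (EBWP_profile vartheta - EBWP_profile (vartheta + e'))).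
  pose proof (Rmin_r (EBWP_profile vartheta - EBWP_profile (vartheta - e'))
                     (EBWP_profile vartheta - EBWP_profile (vartheta + e'))).
  apply Rabs_lt_between'. split.
  - destruct (Rlt_or_le (vartheta - e') x) as [|Hle]; [lra|].
    assert (EBWP_profile x <= EBWP_profile (vartheta - e')).
    { destruct Hle as [Hlt | ->]; [left; apply EBWP_profile_increasing|]; lra. }
    lra.
  - destruct (Rlt_or_le x (vartheta + e')) as [|Hle]; [lra|].
    assert (EBWP_profile x <= EBWP_profile (vartheta + e')).
    { destruct Hle as [Hlt | <-]; [left; apply EBWP_profile_decreasing|]; lra. }
    lra.
Qed.

Lemma is_lim_seq_div_INR c : is_lim_seq (fun n => c / INR n) 0.
Proof.
  replace (Finite 0) with (Finite (c * 0)) by (f_equal; ring).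
  apply is_lim_seq_mult'; [apply is_lim_seq_const|].
  replace (Finite 0) with (Rbar_inv p_infty) by reflexivity.
  apply is_lim_seq_inv; [apply is_lim_seq_INR | discriminate].
Qed.

Lemma is_lim_seq_close (u v w : nat -> R) (l : R) :
  eventually (fun n => Rabs (u n - v n) <= w n) ->
  is_lim_seq v l -> is_lim_seq w 0 -> is_lim_seq u l.
Proof.
  intros Hclose Hv Hw.
  apply is_lim_seq_le_le_loc with (fun n => v n - w n) (fun n => v n + w n).
  - apply (filter_imp _ _ (fun n Hn => proj1 (Rabs_le_between' _ _ _) Hn) Hclose).
  - replace l with (l - 0) by ring. apply is_lim_seq_minus'; assumption.
  - replace l with (l + 0) by ring. apply is_lim_seq_plus'; assumption.
Qed.

Lemma nat_floor_bounds x : 0 <= x -> x - 1 < INR (nat_floor x) <= x.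
Proof.
  intros Hx. unfold nat_floor. destruct (base_Int_part x) as [Hlo Hhi].
  assert (Hz : (0 <= Int_part x)%Z).
  { assert (-1 < Int_part x)%Z by (apply lt_IZR; simpl; lra). lia. }
  rewrite INR_IZR_INZ, Z2Nat.id by exact Hz. lra.
Qed.

Lemma is_lim_seq_nat_floor_ratio x : 0 <= x ->
  is_lim_seq (fun n => INR (nat_floor (INR n * x)) / INR n) x.
Proof.
  intros Hx. apply is_lim_seq_close with (fun _ => x) (fun n => 1 / INR n).
  - exists 1%nat. intros n Hn.
    assert (Hn0 : 0 < INR n) by (apply lt_0_INR; lia).
    destruct (nat_floor_bounds (INR n * x)) as [Hlo Hhi]; [nra|].
    replace (INR (nat_floor (INR n * x)) / INR n - x)
      with ((INR (nat_floor (INR n * x)) - INR n * x) / INR n) by (field; lra).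
    rewrite Rabs_div, (Rabs_pos_eq (INR n)) by lra.
    apply Rmult_le_compat_r; [apply Rlt_le, Rinv_0_lt_compat, Hn0|].
    apply Rabs_le. lra.
  - apply is_lim_seq_const.
  - apply is_lim_seq_div_INR.
Qed.

Lemma nat_floor_ratio_range x : 0 < x < 1 ->
  eventually (fun n => (2 <= nat_floor (INR n * x) < n)%nat).
Proof.
  intros Hx. destruct (proj2 (is_lim_seq_spec _ _) is_lim_seq_INR (3 / x)) as [N HN].
  exists (S N). intros n Hn.
  assert (Hn3 : 3 / x < INR n) by (apply HN; lia).
  assert (Hnx : 3 < INR n * x).
  { apply Rlt_div_l in Hn3; lra. }
  destruct (nat_floor_bounds (INR n * x)) as [Hlo Hhi]; [lra|].
  split.
  - apply INR_le. simpl. lra.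
  - apply INR_lt. nra.
Qed.

Lemma is_lim_seq_EBWP (r : nat -> nat) (x : R) : 0 < x ->
  eventually (fun n => (2 <= r n < n)%nat) ->
  is_lim_seq (fun n => INR (r n) / INR n) x ->
  is_lim_seq (fun n => EBWP n (r n)) (EBWP_profile x).
Proof.
  intros Hx Hr Hlim.
  apply is_lim_seq_close with (fun n => EBWP_profile (INR (r n) / INR n)) (fun n => 10 / INR n).
  - apply (filter_imp _ _ (fun n Hn => EBWP_approx n (r n) (proj1 Hn) (proj2 Hn)) Hr).
  - apply is_lim_seq_continuous; [apply EBWP_profile_continuous, Hx | exact Hlim].
  - apply is_lim_seq_div_INR.
Qed.

Lemma is_lim_seq_EBWP_floor :
  is_lim_seq (fun n => EBWP n (nat_floor (INR n * vartheta))) (EBWP_profile vartheta).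
Proof.
  pose proof vartheta_bounds.
  apply is_lim_seq_EBWP; [lra | apply nat_floor_ratio_range; lra |].
  apply is_lim_seq_nat_floor_ratio; lra.
Qed.

Lemma is_lim_seq_EBWP_maximizer M : is_maximizer M ->
  is_lim_seq (fun n => EBWP n (M n)) (EBWP_profile vartheta).
Proof.
  intros HM. pose proof vartheta_bounds.
  apply is_lim_seq_le_le_loc with
    (fun n => EBWP n (nat_floor (INR n * vartheta)))
    (fun n => EBWP_profile vartheta + 10 / INR n).
  - destruct (nat_floor_ratio_range vartheta ltac:(lra)) as [N HN].
    exists N. intros n Hn. specialize (HN n Hn).
    destruct (HM n ltac:(lia)) as [HMn Hmax].
    split; [apply Hmax; lia|].
    pose proof (proj1 (Rabs_le_between' _ _ _) (EBWP_approx n (M n) ltac:(lia) ltac:(lia))).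
    assert (0 < INR (M n) / INR n) by (apply Rdiv_lt_0_compat; apply lt_0_INR; lia).
    pose proof (EBWP_profile_le_vartheta (INR (M n) / INR n) ltac:(assumption)).
    lra.
  - apply is_lim_seq_EBWP_floor.
  - replace (EBWP_profile vartheta) with (EBWP_profile vartheta + 0) at 1 by ring.
    apply is_lim_seq_plus'; [apply is_lim_seq_const | apply is_lim_seq_div_INR].
Qed.

Lemma is_lim_seq_of_EBWP_profile (x : nat -> R) :
  eventually (fun n => 0 < x n) ->
  is_lim_seq (fun n => EBWP_profile (x n)) (EBWP_profile vartheta) ->
  is_lim_seq x vartheta.
Proof.
  intros Hpos Hlim. apply is_lim_seq_spec. intros e.
  destruct (EBWP_profile_near_max e (cond_pos e)) as [d [Hd Hnear]].
  apply is_lim_seq_spec in Hlim.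
  eapply filter_imp; [|exact (filter_and _ _ Hpos (Hlim (mkposreal d Hd)))].
  intros n [Hxn Hgap]. apply Hnear; [exact Hxn|].
  apply Rabs_lt_between' in Hgap. simpl in Hgap. lra.
Qed.

Lemma is_lim_seq_maximizer_ratio M : is_maximizer M ->
  is_lim_seq (fun n => INR (M n) / INR n) vartheta.
Proof.
  intros HM. apply is_lim_seq_of_EBWP_profile.
  - exists 3%nat. intros n Hn. destruct (HM n ltac:(lia)) as [HMn _].
    apply Rdiv_lt_0_compat; apply lt_0_INR; lia.
  - apply is_lim_seq_close with (fun n => EBWP n (M n)) (fun n => 10 / INR n).
    + exists 3%nat. intros n Hn. destruct (HM n ltac:(lia)) as [HMn _].
      rewrite Rabs_minus_sym. apply EBWP_approx; lia.
    + apply is_lim_seq_EBWP_maximizer, HM.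
    + apply is_lim_seq_div_INR.
Qed.

Theorem theorem4 :
  forall M : nat -> nat, is_maximizer M ->
    is_lim_seq (fun n => INR (M n) / INR n) vartheta /\
    is_lim_seq (fun n => EBWP n (M n)) (vartheta * (1 + vartheta)) /\
    is_lim_seq (fun n => EBWP n (nat_floor (INR n * vartheta)))
               (vartheta * (1 + vartheta)).
Proof.
  intros M HM. rewrite <- EBWP_profile_vartheta.
  split; [|split].
  - apply is_lim_seq_maximizer_ratio, HM.
  - apply is_lim_seq_EBWP_maximizer, HM.
  - apply is_lim_seq_EBWP_floor.
Qed.
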